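(* Let $\sigma$ and $\phi$ be two permutations of $\{1,\dots,n\}$, let $S\subseteq\{1,\dots,n\}$, and let $\theta$ be defined by $\theta(a)=\sigma(a)$ if $a\in S$ and $\theta(a)=\phi(a)$ if $a\notin S$. Then $\theta$ is a permutation if and only if $S$ is stable by $\phi^{-1}\sigma$. Moreover, in that case $\theta_{|S}=\phi_{|S}(\phi^{-1}\sigma)_{|S}$.
   Context: Permutations compose right to left ($(\phi^{-1}\sigma)(a)=\phi^{-1}(\sigma(a))$). For a permutation $\pi$ of a set $H$ and $S\subseteq H$, the restriction $\pi_{|S}$ is the permutation of $S$ whose cycles are obtained from those of $\pi$ by erasing the elements not in $S$; equivalently $\pi_{|S}(s)=\pi^k(s)$ where $k\ge1$ is least with $\pi^k(s)\in S$. *)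

From mathcomp Require Import all_boot all_fingroup.
Set Implicit Arguments. Unset Strict Implicit. Unset Printing Implicit Defensive.

(* Restriction of a map pi : T -> T to S (intended for permutations):
   perm_restr pi S s = pi^k(s) where k >= 1 is least with pi^k(s) \in S.
   For a permutation of the finite type T and s \in S such a k always exists
   and satisfies k <= #|T|, so searching k in 1 .. #|T| is exact.
   (If no such k exists, which never happens for permutations, we return s.) *)
Definition perm_restr (T : finType) (pi : T -> T) (S : {set T}) (s : T) : T :=
  let ks := iota 1 #|T| in
  let P := fun k => iter k pi s \in S in
  if has P ks then iter (nth 0 ks (find P ks)) pi s else s.

From mathcomp Require Import all_boot all_fingroup.

(* Write theta for sigma patched with phi off S and psi for phi^-1 sigma.
   theta can only fail to be injective by colliding a point a of S with a
   point b outside S, and theta a = theta b forces b = psi a; so theta is a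
   bijection exactly when psi maps S into S.  For s in S the theta-orbit of s
   starts with sigma s = phi (psi s) and then follows phi as long as it stays
   outside S, so the first return of theta to S is the first return of phi to
   S from psi s, and psi s is itself the first return of psi to S. *)

Lemma find_eq_prefix (p q : pred nat) (s : seq nat) :
  (forall i, i < size s -> (forall j, j < i -> ~~ q (nth 0 s j)) ->
     p (nth 0 s i) = q (nth 0 s i)) ->
  find p s = find q s.
Proof.
elim: s => [//|x s IH] Hpq /=.
have -> : p x = q x by apply: (Hpq 0).
case qx: (q x) => //; congr _.+1; apply: IH => i lt_i_s Hbefore.
apply: (Hpq i.+1) => // -[|j] lt_j_i /=; first by rewrite qx.
exact: Hbefore.
Qed.

Section PermRestr.
Variables (T : finType) (S : {set T}).

Lemma perm_restr_eq_iter (f g : T -> T) (s t : T) :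
  has (fun k => iter k g t \in S) (iota 1 #|T|) ->
  (forall k, 0 < k -> (forall i, 0 < i < k -> iter i g t \notin S) ->
     iter k f s = iter k g t) ->
  perm_restr f S s = perm_restr g S t.
Proof.
move=> has_ret Hiter; rewrite /perm_restr.
set P := fun k => iter k f s \in S; set Q := fun k => iter k g t \in S.
have lt_ret_T : find Q (iota 1 #|T|) < #|T|.
  by move: has_ret; rewrite has_find size_iota.
have before_ret j : j < find Q (iota 1 #|T|) -> iter j.+1 g t \notin S.
  move=> lt_j_ret; have lt_j_T := ltn_trans lt_j_ret lt_ret_T.
  by have := before_find 0 lt_j_ret; rewrite nth_iota // add1n /Q => ->.
have find_PQ : find P (iota 1 #|T|) = find Q (iota 1 #|T|).
  apply: find_eq_prefix => i; rewrite size_iota => lt_i_T Hbefore.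
  rewrite nth_iota // /P /Q Hiter // => -[//|j] /andP[_].
  rewrite add1n ltnS => lt_j_i.
  by have := Hbefore j lt_j_i; rewrite nth_iota // (ltn_trans lt_j_i lt_i_T).
rewrite (has_find P) (has_find Q) find_PQ size_iota lt_ret_T nth_iota //.
by rewrite Hiter // => -[//|j] /andP[_]; rewrite add1n ltnS; apply: before_ret.
Qed.

Lemma perm_restr_in (pi : T -> T) (s : T) :
  pi s \in S -> perm_restr pi S s = pi s.
Proof.
rewrite /perm_restr; have : 0 < #|T| by apply/card_gt0P; exists s.
by case: #|T| => [//|N] _ /= ->.
Qed.

Lemma has_perm_return (pi : {perm T}) (s : T) :
  s \in S -> has (fun k => iter k pi s \in S) (iota 1 #|T|).
Proof.
move=> sS; apply/hasP; exists (fingraph.order pi s).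
  rewrite mem_iota fingraph.order_gt0 add1n ltnS /=.
  by rewrite -size_orbit -(card_uniqP (orbit_uniq _ _)) max_card.
by rewrite iter_order //; apply: perm_inj.
Qed.

End PermRestr.

Section PermPatch.
Variables (T : finType) (sigma phi : {perm T}) (S : {set T}).

Definition perm_patch (a : T) : T := if a \in S then sigma a else phi a.

Let psi (a : T) : T := (phi^-1)%g (sigma a).

Lemma perm_patch_bijP : bijective perm_patch <-> {in S, forall a, psi a \in S}.
Proof.
have phi_psi a : phi (psi a) = sigma a by rewrite /psi permKV.
split=> [/bij_inj patch_inj a aS | psi_stable].
  apply: contraT => psi_aS.
  have : perm_patch (psi a) = perm_patch a.
    by rewrite /perm_patch aS (negbTE psi_aS) phi_psi.
  by move/patch_inj => eq_psi_a; rewrite eq_psi_a aS in psi_aS.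
apply: injF_bij => a b; rewrite /perm_patch.
case aS: (a \in S); case bS: (b \in S); try exact: perm_inj.
- move=> eq_ab; have eq_b : b = psi a by rewrite /psi eq_ab permK.
  by move: (psi_stable a aS); rewrite -eq_b bS.
- move=> eq_ab; have eq_a : a = psi b by rewrite /psi -eq_ab permK.
  by move: (psi_stable b bS); rewrite -eq_a aS.
Qed.

Lemma iter_perm_patch (s : T) (k : nat) : s \in S -> 0 < k ->
  (forall i, 0 < i < k -> iter i phi (psi s) \notin S) ->
  iter k perm_patch s = iter k phi (psi s).
Proof.
move=> sS; elim: k => [//|[|k] IH] _ outside.
  by rewrite /= /perm_patch sS /psi permKV.
have outside_k : iter k.+1 phi (psi s) \notin S by apply: outside; rewrite ltnSn.
rewrite iterS IH // => [|i /andP[i_gt0 lt_i_k]]; last first.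
  by apply: outside; rewrite i_gt0 ltnW.
by rewrite /perm_patch (negbTE outside_k).
Qed.

Lemma perm_restr_patch (s : T) : {in S, forall a, psi a \in S} -> s \in S ->
  perm_restr perm_patch S s = perm_restr phi S (perm_restr psi S s).
Proof.
move=> psi_stable sS; rewrite [perm_restr psi S s]perm_restr_in ?psi_stable //.
apply: perm_restr_eq_iter; first exact/has_perm_return/psi_stable.
by move=> k; apply: iter_perm_patch.
Qed.

End PermPatch.

Theorem mainTheorem6 (n : nat) (sigma phi : {perm 'I_n}) (S : {set 'I_n}) :
  let theta := fun a : 'I_n => if a \in S then sigma a else phi a in
  let psi := fun a : 'I_n => (phi^-1)%g (sigma a) in
  (bijective theta <-> {in S, forall a, psi a \in S}) /\
  ({in S, forall a, psi a \in S} ->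
     {in S, forall s, perm_restr theta S s
                      = perm_restr phi S (perm_restr psi S s)}).
Proof.
move=> theta psi; split; first exact: perm_patch_bijP.
by move=> psi_stable s; apply: perm_restr_patch.
Qed.
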